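(* Let $L$ be an infinite set and consider the edged cube $\bar Q_L$. Let $f$ be a legal configuration accessible from $f_{\mathrm{solved}}$. Then for each pair $\gamma,\gamma'$ of colors and each cluster $C$ consisting of edge cells, other than the corner cluster, there is at most one pair of coupled edge cells $c,c'$ with $c\in C$, $f(c)=\gamma$ and $f(c')=\gamma'$. Similarly, for each triple $\gamma,\gamma',\gamma''$ of colors, there is at most one triple of mutually coupled corner cells whose colors under $f$ are $\gamma,\gamma',\gamma''$.
   Context: Let $L$ be an infinite set, $-L=\{-r:r\in L\}$ a disjoint copy of $L$, and $0$ a new element; $L^\dagger=-L\cup\{0\}\cup L$ with $-(-r)=r$, $-0=0$. Adjoin $\pm\infty$ with $-(+\infty)=-\infty$ and set $\bar L^\dagger=L^\dagger\cup\{\pm\infty\}$. Points of $U=(\bar L^\dagger)^3$ have coordinates $x,y,z$. The edged cube $\bar Q_L$ is the set of cells $(p,i)$ with $p\in U$, $i\in\{x,y,z\}$, $p_i\in\{\pm\infty\}$ ($i$ marks the face of the cell). Cells whose point has exactly two (resp. three) coordinates in $\{\pm\infty\}$ are edge (resp. corner) cells; distinct cells with the same underlying point are coupled (two coupled cells at each edge point, three mutually coupled cells at each corner point). For $i\in\{x,y,z\}$, $\alpha\in\bar L^\dagger$, the quarter-turn twist $T_{i,\alpha}$ is the permutation of cells fixing every cell whose point $p$ has $p_i\ne\alpha$ and acting on the others by the rotation $T_{x,\alpha}(\alpha,y,z)=(\alpha,-z,y)$, $T_{y,\alpha}(x,\alpha,z)=(z,\alpha,-x)$, $T_{z,\alpha}(x,y,\alpha)=(-y,x,\alpha)$,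 the marked coordinate being carried along by the rotation. Basic twists are $T,T^2,T^3$ for quarter-turn twists $T$. A basic sequence is a sequence $\langle\sigma_\eta:\eta<\theta\rangle$ of basic twists of ordinal length $\theta$. A configuration is a map $f$ from cells to the six colors red, white, green, orange, yellow, blue together with a special value NaC; it is legal if it never takes value NaC. The solved configuration $f_{\mathrm{solved}}$ colors cell $(p,i)$ red, blue, white, orange, green, yellow according as $p_i=+\infty$ with $i=x,y,z$, or $p_i=-\infty$ with $i=x,y,z$. A twist $\sigma$ acts by $(\sigma f)(c)=f(\sigma^{-1}c)$. Applying $\langle\sigma_\eta:\eta<\theta\rangle$ to $f_0$ produces $f_{\eta+1}=\sigma_\eta f_\eta$, and for limit $\lambda\le\theta$, $f_\lambda(c)$ is the eventually constant value of $f_\eta(c)$ ($\eta<\lambda$) if it exists and NaC otherwise; $f_\theta$ is the terminal configuration. $f$ is accessible from $f_0$ if it is the terminal configuration of some basic sequence applied to $f_0$. The cluster of a cell is its orbit under the group generated by all quarter-turn twists; the corner cluster is the set of all corner cells. *)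

From Stdlib Require Import List Bool ClassicalDescription.
Set Implicit Arguments.

Inductive Ldag (L : Type) := LNeg (r : L) | LZero | LPos (r : L).
Arguments LZero {L}.
Definition ldneg {L} (a : Ldag L) : Ldag L :=
  match a with LNeg r => LPos r | LZero => LZero | LPos r => LNeg r end.

Inductive Lbar (L : Type) := LFin (a : Ldag L) | PInf | NInf.
Arguments PInf {L}. Arguments NInf {L}.
Definition lbneg {L} (x : Lbar L) : Lbar L :=
  match x with LFin a => LFin (ldneg a) | PInf => NInf | NInf => PInf end.
Definition isInf {L} (x : Lbar L) : bool :=
  match x with LFin _ => false | _ => true end.

Inductive axis := AX | AY | AZ.

Definition point (L : Type) := (Lbar L * Lbar L * Lbar L)%type.
Definition coord {L} (p : point L) (i : axis) : Lbar L :=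
  match p, i with
  | (x, _, _), AX => x | (_, y, _), AY => y | (_, _, z), AZ => z end.

Definition cell (L : Type) :=
  { c : point L * axis | isInf (coord (fst c) (snd c)) = true }.
Definition cpt {L} (c : cell L) : point L := fst (proj1_sig c).
Definition cax {L} (c : cell L) : axis := snd (proj1_sig c).

Definition num_inf {L} (p : point L) : nat :=
  (if isInf (coord p AX) then 1 else 0) + (if isInf (coord p AY) then 1 else 0)
  + (if isInf (coord p AZ) then 1 else 0).
Definition is_edge {L} (c : cell L) : Prop := num_inf (cpt c) = 2.
Definition is_corner {L} (c : cell L) : Prop := num_inf (cpt c) = 3.
Definition coupled {L} (c c' : cell L) : Prop := c <> c' /\ cpt c = cpt c'.

Definition rot_pt {L} (i : axis) (p : point L) : point L :=
  match p with (x, y, z) =>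
  match i with
  | AX => (x, lbneg z, y)
  | AY => (z, y, lbneg x)
  | AZ => (lbneg y, x, z)
  end end.
(* where the marked coordinate is carried *)
Definition rot_ax (i j : axis) : axis :=
  match i, j with
  | AX, AY => AZ | AX, AZ => AY
  | AY, AX => AZ | AY, AZ => AX
  | AZ, AX => AY | AZ, AY => AX
  | _, j => j end.

Lemma isInf_lbneg {L} (x : Lbar L) : isInf (lbneg x) = isInf x.
Proof. destruct x; reflexivity. Qed.

Lemma rot_isInf {L} (i j : axis) (p : point L) :
  isInf (coord (rot_pt i p) (rot_ax i j)) = isInf (coord p j).
Proof.
  destruct p as [[x y] z]; destruct i, j; simpl; rewrite ?isInf_lbneg; reflexivity.
Qed.

Definition qturn {L} (i : axis) (alpha : Lbar L) (c : cell L) : cell L :=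
  match excluded_middle_informative (coord (cpt c) i = alpha) with
  | left _ =>
      exist _ (rot_pt i (cpt c), rot_ax i (cax c))
            (eq_trans (rot_isInf i (cax c) (cpt c)) (proj2_sig c))
  | right _ => c
  end.

(* colors; a configuration takes values in option color, None = NaC *)
Inductive color := Red | White | Green | Orange | Yellow | Blue.
Definition config (L : Type) := cell L -> option color.
Definition legal {L} (f : config L) : Prop := forall c, f c <> None.

Definition f_solved {L} : config L := fun c =>
  match coord (cpt c) (cax c), cax c with
  | PInf, AX => Some Red  | PInf, AY => Some Blue   | PInf, AZ => Some White
  | NInf, AX => Some Orange | NInf, AY => Some Green | NInf, AZ => Some Yellow
  | LFin _, _ => None (* impossible for a cell *)
  end.

Inductive power := P1 | P2 | P3.
Definition pow_nat (k : power) : nat := match k with P1 => 1 | P2 => 2 | P3 => 3 end.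
Record btwist (L : Type) := BTwist { bt_axis : axis; bt_level : Lbar L; bt_pow : power }.
Definition bt_perm {L} (s : btwist L) (c : cell L) : cell L :=
  Nat.iter (pow_nat (bt_pow s)) (qturn (bt_axis s) (bt_level s)) c.
(* inverse permutation: T^{-k} = T^{4-k} since T^4 = id (rot_pt i is of order 4 and fixes coordinate i) *)
Definition bt_perm_inv {L} (s : btwist L) (c : cell L) : cell L :=
  Nat.iter (4 - pow_nat (bt_pow s)) (qturn (bt_axis s) (bt_level s)) c.
Definition act {L} (s : btwist L) (f : config L) : config L :=
  fun c => f (bt_perm_inv s c).

(* ordinals are represented by (strict) well-orders: a basic sequence of
   length theta is indexed by a well-ordered type W of order type theta;
   stages 0..theta are indexed by option W (Some w = stage w, None = theta) *)
Definition is_wellorder {W : Type} (lt : W -> W -> Prop) : Prop :=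
  (forall x, ~ lt x x) /\ (forall x y z, lt x y -> lt y z -> lt x z) /\
  (forall x y, lt x y \/ x = y \/ lt y x) /\ well_founded lt.

Definition below {W} (lt : W -> W -> Prop) (w : W) (s : option W) : Prop :=
  match s with Some v => lt w v | None => True end.
Definition is_max_below {W} (lt : W -> W -> Prop) (w : W) (s : option W) : Prop :=
  below lt w s /\ forall w', below lt w' s -> w' = w \/ lt w' w.
Definition ev_const {L W} (lt : W -> W -> Prop) (g : option W -> config L)
  (s : option W) (c : cell L) (v : option color) : Prop :=
  exists w0, below lt w0 s /\
    forall w, below lt w s -> (w = w0 \/ lt w0 w) -> g (Some w) c = v.

Definition is_run {L W} (lt : W -> W -> Prop) (sigma : W -> btwist L)
  (f0 : config L) (g : option W -> config L) : Prop :=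
  forall s : option W,
    ((forall w, ~ below lt w s) -> g s = f0) /\
    (forall w, is_max_below lt w s -> g s = act (sigma w) (g (Some w))) /\
    ((exists w, below lt w s) -> (forall w, ~ is_max_below lt w s) ->
       forall c, (forall v, ev_const lt g s c v -> g s c = v) /\
                 ((forall v, ~ ev_const lt g s c v) -> g s c = None)).

Definition accessible {L} (f0 f : config L) : Prop :=
  exists (W : Type) (lt : W -> W -> Prop) (sigma : W -> btwist L)
         (g : option W -> config L),
    is_wellorder lt /\ is_run lt sigma f0 g /\ f = g None.

(* cluster: orbit under the group generated by the quarter-turn twists
   (closure under the T's suffices since T^{-1} = T^3) *)
Inductive cluster {L} (c : cell L) : cell L -> Prop :=
  | cl_refl : cluster c c
  | cl_step : forall d i alpha, cluster c d -> cluster c (qturn i alpha d).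

Definition infinite_type (L : Type) : Prop :=
  ~ exists l : list L, forall x : L, In x l.

(* Every basic twist permutes the cells and preserves clusters, edge and
   corner cells and coupling.  So if a configuration shows no colour pattern
   from a twist-invariant family of forbidden finite patterns, neither does
   its image under a twist; and at a limit stage every cell with a legal
   colour has shown that colour from some earlier stage on, so a pattern
   shown at the limit was shown before.  It remains to check the solved
   configuration, where the colour of a cell determines its marked axis and
   the infinite coordinate on that axis.  Hence three mutually coupled corner
   cells determine their point, and two coupled edge cells determine two of
   its coordinates; the remaining, finite, coordinate is fixed within a
   cluster by an invariant of the quarter turns. *)

From Stdlib Require Import List Bool ClassicalDescription Classical Eqdep_dec.
Import ListNotations.

Lemma cell_ext {L} {c d : cell L} : cpt c = cpt d -> cax c = cax d -> c = d.
Proof.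
  destruct c as [[p m] hc], d as [[q n] hd]; unfold cpt, cax; simpl.
  intros -> ->; f_equal; apply UIP_dec, bool_dec.
Qed.

Lemma coupled_cax {L} {c d : cell L} : coupled c d -> cax c <> cax d.
Proof. intros [Hne Hpt] Hax; exact (Hne (cell_ext Hpt Hax)). Qed.

Lemma point_ext {L} {p q : point L} {i j k} : i <> j -> i <> k -> j <> k ->
  coord p i = coord q i -> coord p j = coord q j -> coord p k = coord q k -> p = q.
Proof.
  destruct p as [[x y] z], q as [[x' y'] z']; destruct i, j, k; simpl;
    intros; congruence.
Qed.

Lemma f_solved_inj {L} (c d : cell L) : f_solved c = f_solved d ->
  cax c = cax d /\ coord (cpt c) (cax c) = coord (cpt d) (cax d).
Proof.
  generalize (proj2_sig c) (proj2_sig d); fold (cpt c) (cax c) (cpt d) (cax d).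
  unfold f_solved.
  destruct (coord (cpt c) (cax c)), (coord (cpt d) (cax d)), (cax c), (cax d);
    simpl; intros; try discriminate; auto.
Qed.

Lemma lbneg_involutive {L} (x : Lbar L) : lbneg (lbneg x) = x.
Proof. destruct x as [[]| |]; reflexivity. Qed.

Lemma rot_pt_inj {L} {i} {p q : point L} : rot_pt i p = rot_pt i q -> p = q.
Proof.
  destruct p as [[x y] z], q as [[x' y'] z']; destruct i; simpl;
    intros H; injection H; intros; subst;
    repeat match goal with H : lbneg _ = lbneg _ |- _ =>
      apply (f_equal lbneg) in H; rewrite !lbneg_involutive in H; subst end;
    reflexivity.
Qed.

Lemma rot_ax_inj {i m n} : rot_ax i m = rot_ax i n -> m = n.
Proof. destruct i, m, n; simpl; congruence. Qed.

Lemma coord_rot_pt_axis {L} i (p : point L) : coord (rot_pt i p) i = coord p i.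
Proof. destruct p as [[x y] z]; destruct i; reflexivity. Qed.

Lemma num_inf_rot_pt {L} i (p : point L) : num_inf (rot_pt i p) = num_inf p.
Proof.
  destruct p as [[x y] z]; destruct i;
    destruct x as [[]| |], y as [[]| |], z as [[]| |]; reflexivity.
Qed.

Lemma cpt_qturn {L} i a (c : cell L) : cpt (qturn i a c) =
  if excluded_middle_informative (coord (cpt c) i = a)
  then rot_pt i (cpt c) else cpt c.
Proof. unfold qturn; destruct excluded_middle_informative; reflexivity. Qed.

Lemma cax_qturn {L} i a (c : cell L) : cax (qturn i a c) =
  if excluded_middle_informative (coord (cpt c) i = a)
  then rot_ax i (cax c) else cax c.
Proof. unfold qturn; destruct excluded_middle_informative; reflexivity. Qed.

Lemma qturn_inj {L} i a (c d : cell L) : qturn i a c = qturn i a d -> c = d.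
Proof.
  intros H.
  assert (Hpt := f_equal cpt H); assert (Hax := f_equal cax H).
  rewrite !cpt_qturn in Hpt; rewrite !cax_qturn in Hax.
  destruct (excluded_middle_informative (coord (cpt c) i = a)) as [Hc|Hc],
           (excluded_middle_informative (coord (cpt d) i = a)) as [Hd|Hd].
  - exact (cell_ext (rot_pt_inj Hpt) (rot_ax_inj Hax)).
  - exfalso; apply Hd; rewrite <- Hpt, coord_rot_pt_axis; exact Hc.
  - exfalso; apply Hc; rewrite Hpt, coord_rot_pt_axis; exact Hd.
  - exact (cell_ext Hpt Hax).
Qed.

Lemma num_inf_qturn {L} i a (c : cell L) :
  num_inf (cpt (qturn i a c)) = num_inf (cpt c).
Proof. rewrite cpt_qturn; destruct excluded_middle_informative; auto using num_inf_rot_pt. Qed.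

Definition is_pinf {L} (x : Lbar L) : bool :=
  match x with PInf => true | _ => false end.

Definition signed_abs {L} (a : Ldag L) (b : bool) : option (L * bool) :=
  match a with LNeg r => Some (r, negb b) | LZero => None | LPos r => Some (r, b) end.

Definition cyclic_pair (m k : axis) : bool :=
  match m, k with AX, AY | AY, AZ | AZ, AX => true | _, _ => false end.

(* At an edge point with finite coordinate a on axis k, marked on axis m:
   the absolute value of a, with a sign flipped by each infinite coordinate
   equal to +oo and by the orientation of (m, k).  Every quarter turn flips
   exactly two of these three signs. *)
Definition edge_invariant {L} (p : point L) (m : axis) : option (L * bool) :=
  match p with
  | (LFin a, y, z) => signed_abs a (xorb (xorb (is_pinf y) (is_pinf z)) (cyclic_pair m AX))
  | (x, LFin a, z) => signed_abs a (xorb (xorb (is_pinf x) (is_pinf z)) (cyclic_pair m AY))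
  | (x, y, LFin a) => signed_abs a (xorb (xorb (is_pinf x) (is_pinf y)) (cyclic_pair m AZ))
  | _ => None
  end.

Lemma edge_invariant_rot_pt {L} i {p : point L} {m} :
  isInf (coord p m) = true -> num_inf p = 2 ->
  edge_invariant (rot_pt i p) (rot_ax i m) = edge_invariant p m.
Proof.
  destruct p as [[x y] z]; destruct i, m;
    destruct x as [[]| |], y as [[]| |], z as [[]| |]; simpl;
    intros; try discriminate; reflexivity.
Qed.

Lemma edge_invariant_cluster {L} {c0 d : cell L} : cluster c0 d -> is_edge d ->
  edge_invariant (cpt d) (cax d) = edge_invariant (cpt c0) (cax c0).
Proof.
  unfold is_edge; induction 1 as [|d i a Hd IH]; intros Hedge; auto.
  rewrite num_inf_qturn in Hedge; rewrite <- (IH Hedge), cpt_qturn, cax_qturn.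
  destruct excluded_middle_informative; auto.
  exact (edge_invariant_rot_pt i (proj2_sig d) Hedge).
Qed.

Lemma edge_point_ext {L} {p q : point L} {m n} : m <> n ->
  coord p m = coord q m -> coord p n = coord q n ->
  isInf (coord p m) = true -> isInf (coord p n) = true ->
  num_inf p = 2 -> num_inf q = 2 -> edge_invariant p m = edge_invariant q m -> p = q.
Proof.
  destruct p as [[x y] z], q as [[x' y'] z']; destruct m, n; simpl;
    intros Hmn Hm Hn; try (exfalso; now apply Hmn); subst;
    repeat match goal with v : Lbar L |- _ => destruct v as [[]| |] end;
    simpl; intros; try discriminate; congruence.
Qed.

Record cube_symmetry {L} (s : cell L -> cell L) : Prop := {
  sym_inj : forall c d, s c = s d -> c = d;
  sym_cluster : forall c0 d, cluster c0 d -> cluster c0 (s d);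
  sym_num_inf : forall c, num_inf (cpt (s c)) = num_inf (cpt c);
  sym_cpt : forall c d, cpt c = cpt d -> cpt (s c) = cpt (s d) }.
Arguments sym_inj {L s}. Arguments sym_cluster {L s}.
Arguments sym_num_inf {L s}. Arguments sym_cpt {L s}.

Lemma qturn_symmetry {L} i a : cube_symmetry (@qturn L i a).
Proof.
  split.
  - apply qturn_inj.
  - intros; now constructor.
  - apply num_inf_qturn.
  - intros c d H; rewrite !cpt_qturn, H; reflexivity.
Qed.

Lemma iter_symmetry {L} n (s : cell L -> cell L) :
  cube_symmetry s -> cube_symmetry (Nat.iter n s).
Proof.
  intros Hs; induction n as [|n IH]; simpl; split; auto.
  - intros c d H; apply (sym_inj IH), (sym_inj Hs), H.
  - intros; apply (sym_cluster Hs), (sym_cluster IH); assumption.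
  - intros c; simpl; rewrite (sym_num_inf Hs); apply (sym_num_inf IH).
  - intros; apply (sym_cpt Hs), (sym_cpt IH); assumption.
Qed.

Lemma bt_perm_inv_symmetry {L} (s : btwist L) : cube_symmetry (bt_perm_inv s).
Proof. apply iter_symmetry, qturn_symmetry. Qed.

Definition edge_pair {L} (c0 c c' : cell L) : Prop :=
  cluster c0 c /\ is_edge c /\ is_edge c' /\ coupled c c'.

Definition corner_triple {L} (c c' c'' : cell L) : Prop :=
  is_corner c /\ is_corner c' /\ is_corner c'' /\
  coupled c c' /\ coupled c c'' /\ coupled c' c''.

Section Symmetry.
Context {L : Type} {s : cell L -> cell L} (Hs : cube_symmetry s).

Lemma sym_coupled {c d} : coupled c d -> coupled (s c) (s d).
Proof.
  intros [Hne Hpt]; split.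
  - intros H; exact (Hne (sym_inj Hs _ _ H)).
  - exact (sym_cpt Hs _ _ Hpt).
Qed.

Lemma sym_edge {c} : is_edge c -> is_edge (s c).
Proof. unfold is_edge; rewrite (sym_num_inf Hs); auto. Qed.

Lemma sym_corner {c} : is_corner c -> is_corner (s c).
Proof. unfold is_corner; rewrite (sym_num_inf Hs); auto. Qed.

Lemma sym_edge_pair {c0 c c'} : edge_pair c0 c c' -> edge_pair c0 (s c) (s c').
Proof.
  intros [K [E [E' P]]].
  exact (conj (sym_cluster Hs _ _ K) (conj (sym_edge E) (conj (sym_edge E') (sym_coupled P)))).
Qed.

Lemma sym_corner_triple {c c' c''} :
  corner_triple c c' c'' -> corner_triple (s c) (s c') (s c'').
Proof.
  intros [K [K' [K'' [P [P' P'']]]]].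
  repeat split; apply sym_corner || apply sym_coupled; assumption.
Qed.

End Symmetry.

Definition matches {L} (f : config L) (l : list (cell L * color)) : Prop :=
  Forall (fun cv => f (fst cv) = Some (snd cv)) l.

Definition relabel {L} (s : cell L -> cell L) (l : list (cell L * color)) :=
  map (fun cv => (s (fst cv), snd cv)) l.

Definition avoids {L} (F : list (cell L * color) -> Prop) (f : config L) : Prop :=
  forall l, F l -> ~ matches f l.

Lemma matches_act {L} {s : btwist L} {f l} :
  matches (act s f) l -> matches f (relabel (bt_perm_inv s) l).
Proof. intros H; apply Forall_map, H. Qed.

Section Runs.
Context {L W : Type} {lt : W -> W -> Prop} {sigma : W -> btwist L}
  {f0 : config L} {g : option W -> config L}.
Hypothesis lt_wo : is_wellorder lt.
Hypothesis g_run : is_run lt sigma f0 g.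

Let later (w w' : W) : Prop := w = w' \/ lt w w'.

Lemma later_trans {w1 w2 w3} : later w1 w2 -> later w2 w3 -> later w1 w3.
Proof.
  destruct lt_wo as [_ [Htr _]].
  intros [<-|H12] [<-|H23]; unfold later; eauto.
Qed.

Lemma later_join w1 w2 : exists w, (w = w1 \/ w = w2) /\ later w1 w /\ later w2 w.
Proof.
  destruct lt_wo as [_ [_ [Htot _]]].
  destruct (Htot w1 w2) as [H|[<-|H]].
  - exists w2; unfold later; tauto.
  - exists w1; unfold later; tauto.
  - exists w1; unfold later; tauto.
Qed.

Lemma limit_eventually_matches {s l} :
  (exists w, below lt w s) -> (forall w, ~ is_max_below lt w s) ->
  matches (g s) l ->
  exists w0, below lt w0 s /\
    forall w, below lt w s -> later w0 w -> matches (g (Some w)) l.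
Proof.
  intros [w00 H00] Hnomax Hl.
  pose proof (proj2 (proj2 (g_run s)) (ex_intro _ w00 H00) Hnomax) as Hlim.
  induction Hl as [|[c v] l Hc _ IH].
  - exists w00; split; [exact H00|constructor].
  - simpl in Hc; destruct IH as [w2 [Hb2 H2]].
    assert (Hev : exists v', ev_const lt g s c v').
    { apply NNPP; intros Hno; rewrite (proj2 (Hlim c)) in Hc; [discriminate|].
      intros v' Hv'; eauto. }
    destruct Hev as [v' Hv']; rewrite (proj1 (Hlim c) v' Hv') in Hc; subst v'.
    destruct Hv' as [w1 [Hb1 H1]].
    destruct (later_join w1 w2) as [w0 [Hw0 [L1 L2]]].
    exists w0; split; [destruct Hw0 as [->| ->]; assumption|].
    intros w Hb Hw; constructor.
    + apply H1; [assumption|].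
      destruct (later_trans L1 Hw) as [->|]; auto.
    + exact (H2 w Hb (later_trans L2 Hw)).
Qed.

Lemma run_avoids {F : list (cell L * color) -> Prop} :
  (forall t l, F l -> F (relabel (bt_perm_inv t) l)) ->
  avoids F f0 -> avoids F (g None).
Proof.
  intros HF H0.
  assert (Hstage : forall s, (forall w, below lt w s -> avoids F (g (Some w))) ->
                             avoids F (g s)).
  { intros s IH; destruct (g_run s) as [Hinit [Hsucc _]].
    destruct (classic (exists w, below lt w s)) as [Hex|Hnone].
    - destruct (classic (exists w, is_max_below lt w s)) as [[w Hw]|Hnomax].
      + rewrite (Hsucc w Hw); intros l Hl Hm.
        exact (IH w (proj1 Hw) _ (HF _ _ Hl) (matches_act Hm)).
      + intros l Hl Hm.
        destruct (limit_eventually_matches Hex (fun w Hw => Hnomax (ex_intro _ w Hw)) Hm)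
          as [w [Hb Hw]].
        exact (IH w Hb l Hl (Hw w Hb (or_introl eq_refl))).
    - rewrite Hinit; [exact H0|].
      intros w Hw; apply Hnone; eauto. }
  apply Hstage; intros w _.
  destruct lt_wo as [_ [_ [_ Hwf]]].
  induction w as [w IH] using (well_founded_ind Hwf).
  apply Hstage, IH.
Qed.

End Runs.

Definition edge_clash {L} (c0 : cell L) (g1 g2 : color) (l : list (cell L * color)) :=
  exists c1 c1' c2 c2', edge_pair c0 c1 c1' /\ edge_pair c0 c2 c2' /\
    ~ (c1 = c2 /\ c1' = c2') /\ l = [(c1, g1); (c1', g2); (c2, g1); (c2', g2)].

Definition corner_clash {L} (g1 g2 g3 : color) (l : list (cell L * color)) :=
  exists c1 c1' c1'' c2 c2' c2'', corner_triple c1 c1' c1'' /\ corner_triple c2 c2' c2'' /\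
    ~ (c1 = c2 /\ c1' = c2' /\ c1'' = c2'') /\
    l = [(c1, g1); (c1', g2); (c1'', g3); (c2, g1); (c2', g2); (c2'', g3)].

Lemma edge_clash_relabel {L} (c0 : cell L) g1 g2 {s l} : cube_symmetry s ->
  edge_clash c0 g1 g2 l -> edge_clash c0 g1 g2 (relabel s l).
Proof.
  intros Hs [c1 [c1' [c2 [c2' [P1 [P2 [Hne ->]]]]]]].
  exists (s c1), (s c1'), (s c2), (s c2').
  split; [exact (sym_edge_pair Hs P1)|split; [exact (sym_edge_pair Hs P2)|split; [|reflexivity]]].
  intros [H H']; apply Hne; split; apply (sym_inj Hs); assumption.
Qed.

Lemma corner_clash_relabel {L} g1 g2 g3 {s : cell L -> cell L} {l} : cube_symmetry s ->
  corner_clash g1 g2 g3 l -> corner_clash g1 g2 g3 (relabel s l).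
Proof.
  intros Hs [c1 [c1' [c1'' [c2 [c2' [c2'' [T1 [T2 [Hne ->]]]]]]]]].
  exists (s c1), (s c1'), (s c1''), (s c2), (s c2'), (s c2'').
  split; [exact (sym_corner_triple Hs T1)|split; [exact (sym_corner_triple Hs T2)|split; [|reflexivity]]].
  intros [H [H' H'']]; apply Hne; repeat split; apply (sym_inj Hs); assumption.
Qed.

Lemma f_solved_edge_pair_unique {L} {c0 c1 c1' c2 c2' : cell L} :
  edge_pair c0 c1 c1' -> edge_pair c0 c2 c2' ->
  f_solved c1 = f_solved c2 -> f_solved c1' = f_solved c2' -> c1 = c2 /\ c1' = c2'.
Proof.
  intros [K1 [E1 [E1' P1]]] [K2 [E2 [E2' P2]]] F F'.
  destruct (f_solved_inj c1 c2 F) as [A Q], (f_solved_inj c1' c2' F') as [A' Q'].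
  pose proof (coupled_cax P1) as Hax.
  destruct P1 as [_ Pt1], P2 as [_ Pt2].
  rewrite <- A in Q; rewrite <- Pt1, <- Pt2, <- A' in Q'.
  assert (Hpt : cpt c1 = cpt c2).
  { apply (edge_point_ext Hax Q Q' (proj2_sig c1)); auto.
    - rewrite Pt1; exact (proj2_sig c1').
    - rewrite (edge_invariant_cluster K1 E1), A, (edge_invariant_cluster K2 E2); reflexivity. }
  split; apply cell_ext; congruence.
Qed.

Lemma f_solved_corner_triple_unique {L} {c1 c1' c1'' c2 c2' c2'' : cell L} :
  corner_triple c1 c1' c1'' -> corner_triple c2 c2' c2'' ->
  f_solved c1 = f_solved c2 -> f_solved c1' = f_solved c2' -> f_solved c1'' = f_solved c2'' ->
  c1 = c2 /\ c1' = c2' /\ c1'' = c2''.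
Proof.
  intros [_ [_ [_ [P1 [P1' P1'']]]]] [_ [_ [_ [P2 [P2' _]]]]] F F' F''.
  destruct (f_solved_inj c1 c2 F) as [A Q], (f_solved_inj c1' c2' F') as [A' Q'],
           (f_solved_inj c1'' c2'' F'') as [A'' Q''].
  pose proof (coupled_cax P1) as N1; pose proof (coupled_cax P1') as N2.
  pose proof (coupled_cax P1'') as N3.
  destruct P1 as [_ Pt1], P1' as [_ Pt1'], P2 as [_ Pt2], P2' as [_ Pt2'].
  rewrite <- A in Q; rewrite <- Pt1, <- Pt2, <- A' in Q';
    rewrite <- Pt1', <- Pt2', <- A'' in Q''.
  pose proof (point_ext N1 N2 N3 Q Q' Q'') as Hpt.
  repeat split; apply cell_ext; congruence.
Qed.

Lemma f_solved_avoids_edge_clash {L} (c0 : cell L) g1 g2 :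
  avoids (edge_clash c0 g1 g2) f_solved.
Proof.
  intros l [c1 [c1' [c2 [c2' [P1 [P2 [Hne ->]]]]]]] Hm; apply Hne.
  inversion_clear Hm as [|? ? F1 Hm1]; inversion_clear Hm1 as [|? ? F1' Hm2].
  inversion_clear Hm2 as [|? ? F2 Hm3]; inversion_clear Hm3 as [|? ? F2' _]; simpl in *.
  apply (f_solved_edge_pair_unique P1 P2); congruence.
Qed.

Lemma f_solved_avoids_corner_clash {L} g1 g2 g3 :
  avoids (@corner_clash L g1 g2 g3) f_solved.
Proof.
  intros l [c1 [c1' [c1'' [c2 [c2' [c2'' [T1 [T2 [Hne ->]]]]]]]]] Hm; apply Hne.
  inversion_clear Hm as [|? ? F1 Hm1]; inversion_clear Hm1 as [|? ? F1' Hm2].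
  inversion_clear Hm2 as [|? ? F1'' Hm3]; inversion_clear Hm3 as [|? ? F2 Hm4].
  inversion_clear Hm4 as [|? ? F2' Hm5]; inversion_clear Hm5 as [|? ? F2'' _]; simpl in *.
  apply (f_solved_corner_triple_unique T1 T2); congruence.
Qed.

Theorem lemma4p1 (L : Type) (HL : infinite_type L) (f : config L)
  (Hacc : accessible f_solved f) (Hleg : legal f) :
  (forall (g1 g2 : color) (c0 : cell L),
     (forall d, cluster c0 d -> is_edge d) ->
     forall c1 c1' c2 c2' : cell L,
       cluster c0 c1 -> is_edge c1 -> is_edge c1' -> coupled c1 c1' ->
       f c1 = Some g1 -> f c1' = Some g2 ->
       cluster c0 c2 -> is_edge c2 -> is_edge c2' -> coupled c2 c2' ->
       f c2 = Some g1 -> f c2' = Some g2 ->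
       c1 = c2 /\ c1' = c2')
  /\
  (forall (g1 g2 g3 : color) (c1 c1' c1'' c2 c2' c2'' : cell L),
     is_corner c1 -> is_corner c1' -> is_corner c1'' ->
     coupled c1 c1' -> coupled c1 c1'' -> coupled c1' c1'' ->
     f c1 = Some g1 -> f c1' = Some g2 -> f c1'' = Some g3 ->
     is_corner c2 -> is_corner c2' -> is_corner c2'' ->
     coupled c2 c2' -> coupled c2 c2'' -> coupled c2' c2'' ->
     f c2 = Some g1 -> f c2' = Some g2 -> f c2'' = Some g3 ->
     c1 = c2 /\ c1' = c2' /\ c1'' = c2'').
Proof.
  destruct Hacc as [W [lt [sigma [g [Hwo [Hrun ->]]]]]].
  split.
  - intros g1 g2 c0 _ c1 c1' c2 c2' K1 E1 E1' P1 F1 F1' K2 E2 E2' P2 F2 F2'.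
    apply NNPP; intros Hne.
    apply (run_avoids Hwo Hrun
              (fun t l => edge_clash_relabel c0 g1 g2 (bt_perm_inv_symmetry t))
              (f_solved_avoids_edge_clash c0 g1 g2)
              [(c1, g1); (c1', g2); (c2, g1); (c2', g2)]).
    + exists c1, c1', c2, c2'; unfold edge_pair; tauto.
    + repeat constructor; assumption.
  - intros g1 g2 g3 c1 c1' c1'' c2 c2' c2'' K1 K1' K1'' P1 P1' P1'' F1 F1' F1''
           K2 K2' K2'' P2 P2' P2'' F2 F2' F2''.
    apply NNPP; intros Hne.
    apply (run_avoids Hwo Hrun
              (fun t l => corner_clash_relabel g1 g2 g3 (bt_perm_inv_symmetry t))
              (f_solved_avoids_corner_clash g1 g2 g3)
              [(c1, g1); (c1', g2); (c1'', g3); (c2, g1); (c2', g2); (c2'', g3)]).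
    + exists c1, c1', c1'', c2, c2', c2''; unfold corner_triple; tauto.
    + repeat constructor; assumption.
Qed.
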